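(* Let $r \ge 3$ be an integer, let $n \ge 1$, and let $q$ be a prime power with $q \ge n$. Let $g^{q\text{-}\mathrm{ff}}_r(n)$ be the maximum cardinality of a family $\mathcal{F} \subseteq [q]^n$ containing no $q$-ary focal family of size $r$. Then $g^{q\text{-}\mathrm{ff}}_r(n) \ge q^{\lceil \frac{(r-2)n}{r-1} \rceil}$.
   Context: Here $[q]=\{1,\dots,q\}$. A family $x^{(0)}, x^{(1)}, \dots, x^{(r-1)}$ of $r$ distinct vectors in $[q]^n$ is a ($q$-ary) focal family with focus $x^{(0)}$ if for every coordinate $i \in [n]$, at least $r-2$ of the $r-1$ entries $x^{(1)}_i, \dots, x^{(r-1)}_i$ are equal to $x^{(0)}_i$. A family contains a focal family of size $r$ if some $r$ distinct members, with some choice of focus among them, form a focal family. *)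

From mathcomp Require Import all_boot.
Set Implicit Arguments. Unset Strict Implicit. Unset Printing Implicit Defensive.

(* [q]^n is modelled as {ffun 'I_n -> 'I_q} (symbols 0..q-1 instead of 1..q). *)
Definition qvec (q n : nat) := {ffun 'I_n -> 'I_q}.

Definition is_focal (q n : nat) (S : {set qvec q n}) (x0 : qvec q n) : bool :=
  (x0 \in S) &&
  [forall i : 'I_n, #|S| - 2 <= #|[set y in S :\ x0 | y i == x0 i]|].

Definition has_focal (q n r : nat) (F : {set qvec q n}) : bool :=
  [exists S : {set qvec q n},
     [&& S \subset F, #|S| == r & [exists x0 in S, is_focal S x0]]].

Definition g_qff (q r n : nat) : nat :=
  \max_(F : {set qvec q n} | ~~ has_focal r F) #|F|.

Definition prime_power (q : nat) : Prop :=
  exists p k : nat, [/\ prime p, 0 < k & q = p ^ k].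

Definition ceil_div (a b : nat) : nat := (a + b - 1) %/ b.

From mathcomp Require Import all_boot all_algebra all_field zify.
Set Implicit Arguments. Unset Strict Implicit. Unset Printing Implicit Defensive.
Import GRing.Theory.

(* In a focal family, every coordinate is changed (relative to the focus) by at
   most one of the other r - 1 members, so their Hamming distances to the focus
   add up to at most n.  A code of minimum distance d with (r - 1) d > n thus
   contains no focal family of size r.  The Reed-Solomon code of polynomials of
   degree < k evaluated at n distinct points of the field with q elements has
   q^k words and minimum distance n - k + 1, and k = ceil((r-2)n/(r-1)) is
   exactly the largest dimension for which (r - 1)(n - k + 1) > n. *)

Definition hamming (I : finType) (T : eqType) (x y : {ffun I -> T}) : nat :=
  #|[set i | x i != y i]|.

Section Hamming.
Variables (I : finType) (T : eqType).
Implicit Types x y : {ffun I -> T}.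

Lemma hammingxx x : hamming x x = 0.
Proof. by apply: eq_card0 => i; rewrite inE eqxx. Qed.

Lemma hamming_agree x y : hamming x y + #|[set i | x i == y i]| = #|I|.
Proof.
rewrite addnC -(cardsC [set i | x i == y i]); congr (_ + _).
by apply: eq_card => i; rewrite !inE.
Qed.

Lemma hamming_map (U : eqType) (f : T -> U) x y : injective f ->
  hamming [ffun i => f (x i)] [ffun i => f (y i)] = hamming x y.
Proof.
by move=> f_inj; apply: eq_card => i; rewrite !inE !ffunE (inj_eq f_inj).
Qed.

End Hamming.

Lemma sum_card_exchange (I J : finType) (A : {set J}) (P : J -> pred I) :
  \sum_(y in A) #|[set i | P y i]| = \sum_i #|[set y in A | P y i]|.
Proof.
under eq_bigr do rewrite -sum1dep_card.
rewrite (exchange_big_dep predT) //=.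
by apply: eq_bigr => i _; rewrite sum1dep_card.
Qed.

Section FocalFamilies.
Variables q n : nat.
Implicit Types S F : {set qvec q n}.

Lemma focal_disagree_le1 S (x0 : qvec q n) (i : 'I_n) :
  is_focal S x0 -> #|[set y in S :\ x0 | y i != x0 i]| <= 1.
Proof.
case/andP=> Sx0 /forallP/(_ i); set T := S :\ x0.
have cardT : #|T| = #|S| - 1 by rewrite /T (cardsD1 x0 S) Sx0 add1n subn1.
have split_T : #|[set y in T | y i == x0 i]| + #|[set y in T | y i != x0 i]| = #|T|.
  rewrite !setIdE -(cardsID [set y : qvec q n | y i == x0 i] T) setDE.
  by congr (_ + #|T :&: _|); apply/setP => y; rewrite !inE.
lia.
Qed.

Lemma sum_hamming_focus_le S (x0 : qvec q n) :
  is_focal S x0 -> \sum_(y in S :\ x0) hamming y x0 <= n.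
Proof.
move=> focal; rewrite sum_card_exchange.
apply: (@leq_trans (\sum_(i < n) 1)); last by rewrite sum1_card card_ord.
by apply: leq_sum => i _; exact: focal_disagree_le1.
Qed.

Lemma has_focalN_hamming r d F :
  n < (r - 1) * d ->
  (forall x y, x \in F -> y \in F -> x != y -> d <= hamming x y) ->
  ~~ has_focal r F.
Proof.
move=> n_lt dist_F; apply/existsP => -[S /and3P[sSF /eqP cardS]].
case/existsP=> x0 /andP[Sx0 focal].
have cardT : #|S :\ x0| = r - 1 by rewrite (cardsD1 x0 S) Sx0 in cardS; lia.
suff : (r - 1) * d <= n by rewrite leqNgt n_lt.
rewrite -cardT -sum_nat_const (leq_trans _ (sum_hamming_focus_le focal)) //.
apply: leq_sum => y /setD1P[y_x0 Sy].
by apply: dist_F; rewrite ?(subsetP sSF).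
Qed.

End FocalFamilies.

Lemma card_roots_image_lt (R : idomainType) (I : finType) (ev : I -> R)
    (p : {poly R}) :
  injective ev -> (p != 0)%R -> #|[set i | root p (ev i)]| < size p.
Proof.
move=> ev_inj p_neq0; set A := [set i | _].
have := max_poly_roots p_neq0 (rs := map ev (enum A)).
rewrite size_map -cardE map_inj_uniq // enum_uniq; apply => //.
by apply/allP => x /mapP[i]; rewrite mem_enum inE => root_i ->.
Qed.

Section ReedSolomon.
Variables (K : fieldType) (I : finType) (ev : I -> K) (k : nat).
Hypothesis ev_inj : injective ev.
Local Open Scope ring_scope.

Definition rs_word (m : 'rV[K]_k) : {ffun I -> K} := [ffun i => (rVpoly m).[ev i]].

Lemma rs_word_hamming m m' :
  m != m' -> (#|I| < hamming (rs_word m) (rs_word m') + k)%N.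
Proof.
move=> m_neq; rewrite -(hamming_agree (rs_word m) (rs_word m')) ltn_add2l.
set p := rVpoly (m - m').
have p_neq0 : p != 0.
  apply: contra m_neq => /eqP p0; rewrite -subr_eq0; apply/eqP.
  by apply: (can_inj rVpolyK); rewrite raddf0 -/p.
have -> : [set i | rs_word m i == rs_word m' i] = [set i | root p (ev i)].
  by apply/setP => i; rewrite !inE !ffunE /root /p raddfB hornerD hornerN subr_eq0.
exact: leq_trans (card_roots_image_lt ev_inj p_neq0) (size_poly _ _).
Qed.

End ReedSolomon.

Lemma ltn_mul_ceil_div (a b : nat) : 0 < b -> b * ceil_div a b < a + b.
Proof.
move=> b_gt0; rewrite /ceil_div mulnC.
apply: leq_ltn_trans (leq_divM _ _) _; lia.
Qed.

Theorem proposition3p2 (r n q : nat) :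
  3 <= r -> 1 <= n -> prime_power q -> n <= q ->
  q ^ (ceil_div ((r - 2) * n) (r - 1)) <= g_qff q r n.
Proof.
move=> r_ge3 _ [p [e [p_prime e_gt0 q_def]]] n_le_q.
have [K _ cardK] := pPrimePowerField p_prime e_gt0; rewrite -q_def in cardK.
set k := ceil_div _ _.
have k_bound : (r - 1) * k < (r - 2) * n + (r - 1) by apply: ltn_mul_ceil_div; lia.
have [dist_big k_le_n] : n < (r - 1) * (n.+1 - k) /\ k <= n by split; nia.
have n_le_K : n <= #|K| by rewrite cardK.
pose ev (i : 'I_n) : K := enum_val (widen_ord n_le_K i).
have ev_inj : injective ev by move=> i j /enum_val_inj /(congr1 val) /= /val_inj.
pose toI (x : K) : 'I_q := cast_ord cardK (enum_rank x).
have toI_inj : injective toI by move=> x y /cast_ord_inj /enum_rank_inj.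
pose code (m : 'rV[K]_k) : qvec q n := [ffun i => toI (rs_word ev m i)].
have code_dist m m' : m != m' -> n < hamming (code m) (code m') + k.
  by move=> m_neq; rewrite hamming_map // -{1}[n]card_ord rs_word_hamming.
have code_inj : injective code.
  move=> m m' code_eq; apply/eqP; apply: contraT => /code_dist.
  by rewrite code_eq hammingxx ltnNge k_le_n.
have -> : q ^ k = #|code @: setT| by rewrite card_imset // cardsT card_mx cardK mul1n.
apply: leq_bigmax_cond; apply: (has_focalN_hamming dist_big).
move=> _ _ /imsetP[m _ ->] /imsetP[m' _ ->] code_neq.
have /code_dist : m != m' by apply: contraNneq code_neq => ->.
by rewrite leq_subLR addnC.
Qed.
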